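(* Let $(q_n)$ be the Fibonacci Quilt sequence and for $n\ge1$ let $h_n$ be the number of integers $m\in[1,q_{n+1}-1]$ for which the greedy decomposition of $m$ is an FQ-legal decomposition. Then $h_k=k$ for $1\le k\le5$, and for all $n\ge6$, \[ h_n=h_{n-1}+h_{n-5}+1. \]
   Context: Given an increasing sequence of positive integers $(q_i)_{i\ge1}$, an FQ-legal decomposition of an integer $m\ge0$ is an expression $m=q_{\ell_1}+q_{\ell_2}+\cdots+q_{\ell_t}$ ($t\ge0$, the empty sum representing $0$) with distinct indices $\ell_1>\ell_2>\cdots>\ell_t$ such that $|\ell_i-\ell_j|\notin\{1,3,4\}$ for all $i,j$, and $\{1,3\}\not\subset\{\ell_1,\dots,\ell_t\}$. The Fibonacci Quilt sequence is the increasing sequence of positive integers $(q_i)_{i\ge1}$ in which each $q_i$ is the smallest positive integer having no FQ-legal decomposition using only $q_1,\dots,q_{i-1}$. Its first terms are $1,2,3,4,5,7,9,12,16,21,28,37,49,\dots$. The greedy decomposition of a positive integer $m$ is obtained by choosing the largest $q_k\le m$ as a summand and, if $m-q_k>0$, recursively appending the greedy decomposition of $m-q_k$; the greedy algorithm succeeds on $m$ if the resulting decomposition is FQ-legal. *)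

From mathcomp Require Import all_boot.
Set Implicit Arguments. Unset Strict Implicit. Unset Printing Implicit Defensive.

Fixpoint sublists (s : seq nat) : seq (seq nat) :=
  if s is x :: s' then
    let r := sublists s' in [seq x :: t | t <- r] ++ r
  else [:: [::]].

Definition FQ_legal (S : seq nat) : bool :=
  [&& uniq S, all (fun i => 0 < i) S,
      all (fun i => all (fun j =>
             [&& i - j != 1, i - j != 3 & i - j != 4]) S) S
    & ~~ ((1 \in S) && (3 \in S))].

(* l = [:: q_1; ...; q_k].  decomp_with l m : m has an FQ-legal decomposition
   using only q_1, ..., q_k (indices range over 1..k, q_i = nth 0 l i.-1). *)
Definition decomp_with (l : seq nat) (m : nat) : bool :=
  has (fun S => FQ_legal S && (sumn [seq nth 0 l i.-1 | i <- S] == m))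
      (sublists (iota 1 (size l))).

(* Smallest positive integer with no FQ-legal decomposition using l.
   The search over [1, 1 + sumn l] suffices, since 1 + sumn l exceeds
   every sum of distinct terms of l. *)
Definition next_FQ (l : seq nat) : nat :=
  (find (fun m => ~~ decomp_with l m) (iota 1 (sumn l).+1)).+1.

Fixpoint FQ_list (n : nat) : seq nat :=
  if n is n'.+1 then rcons (FQ_list n') (next_FQ (FQ_list n')) else [::].

(* The Fibonacci Quilt sequence, indexed from 1 (q 0 = 0 is a dummy). *)
Definition q (n : nat) : nat := nth 0 (FQ_list n) n.-1.

(* Index of the largest q_k <= m (for m >= 1; q_k >= k so k <= m). *)
Definition greedy_idx (m : nat) : nat :=
  \max_(1 <= k < m.+1 | q k <= m) k.

(* Greedy decomposition (list of indices, in order of choice); fuel m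
   is sufficient since each step decreases m by at least 1. *)
Fixpoint greedy_aux (fuel m : nat) : seq nat :=
  if fuel is f.+1 then
    if m is 0 then [::]
    else greedy_idx m :: greedy_aux f (m - q (greedy_idx m))
  else [::].

Definition greedy (m : nat) : seq nat := greedy_aux m m.

Definition h (n : nat) : nat :=
  count (fun m => FQ_legal (greedy m)) (iota 1 (q n.+1 - 1)).

From mathcomp Require Import all_boot zify.
Set Implicit Arguments. Unset Strict Implicit. Unset Printing Implicit Defensive.

(* The sequence Q below satisfies Q_(n+1) = Q_n + Q_(n-4) for n >= 6; it is
   the Fibonacci Quilt sequence.  In a legal index set two indices differ by 2
   or by at least 5, and if the top index j is accompanied by j - 2, every other
   index is at most j - 7.  Peeling off top indices in a strong induction shows
   that legal sets with indices at most n have sums below Q_(n+3), never sum to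
   exactly Q_(n+1), and realise every m < Q_(n+1); hence Q_(n+1) is the least
   positive integer without a legal decomposition over Q_1, ..., Q_n, i.e. q = Q.
   For the count: if Q_n <= m < Q_(n+1) with n >= 6, the greedy algorithm takes
   Q_n and leaves r = m - Q_n < Q_(n-4), whose greedy indices are at most n - 5
   and so compatible with n.  Thus m is counted iff r = 0 or r is counted, which
   gives h_n = h_(n-1) + 1 + h_(n-5). *)

Fixpoint Q (n : nat) : nat :=
  match n with
  | ((_.+2 as k2).+4 as k6).+1 => Q k6 + Q k2
  | _ => nth 0 [:: 0; 1; 2; 3; 4; 5; 7] n
  end.

Lemma Q_rec k : Q k.+4.+3 = Q k.+4.+2 + Q k.+2.
Proof. by []. Qed.

Lemma leq_Q n : n <= Q n.
Proof.
elim/ltn_ind: n => -[|[|[|[|[|[|[|k]]]]]]] // IH.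
by rewrite Q_rec; have := IH k.+4.+2 (ltnSn _); have := IH k.+2 ltac:(lia); lia.
Qed.

Lemma ltn_Q : {mono Q : m n / m < n}.
Proof.
have Q_incr n : Q n < Q n.+1.
  by case: n => [|[|[|[|[|[|k]]]]]] //; rewrite Q_rec; have := leq_Q k.+2; lia.
exact/leqW_mono/leq_mono/(homo_ltn ltn_trans Q_incr).
Qed.

Lemma Q_rec2 k : Q k.+4.+2 = Q k.+4 + Q k.+3.
Proof.
elim/ltn_ind: k => -[|[|[|[|[|k]]]]] // IH.
have := IH k.+4 ltac:(lia); have := IH k ltac:(lia).
by have := Q_rec k.+4; have := Q_rec k.+2; have := Q_rec k.+1; lia.
Qed.

Lemma legal_uniq S : FQ_legal S -> uniq S.
Proof. by case/and4P. Qed.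

Lemma legal_gt0 S i : FQ_legal S -> i \in S -> 0 < i.
Proof. by case/and4P=> _ /allP posS _ _ /posS. Qed.

Lemma legal_gap S i j : FQ_legal S -> i \in S -> j \in S -> i < j ->
  j = i.+2 \/ i + 5 <= j.
Proof. by case/and4P=> _ _ /allP gapS _ iS /gapS/allP/(_ i iS); lia. Qed.

Lemma legal_subseq S T : subseq T S -> FQ_legal S -> FQ_legal T.
Proof.
move=> sTS /and4P[uS /allP posS /allP gapS no13]; have subTS := mem_subseq sTS.
apply/and4P; split.
- exact: subseq_uniq sTS uS.
- by apply/allP=> i /subTS/posS.
- by apply/allP=> i /subTS/gapS/allP gapi; apply/allP=> j /subTS/gapi.
- by apply: contra no13 => /andP[/subTS -> /subTS ->].
Qed.

Lemma legal_perm S T : perm_eq S T -> FQ_legal S = FQ_legal T.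
Proof.
move=> pST; rewrite /FQ_legal (perm_uniq pST) !(perm_all _ pST) !(perm_mem pST).
by congr [&& _, _, _ & _]; apply: eq_all => i; apply: perm_all.
Qed.

Lemma legal_cons k s : all (fun i => i <= k.+1) s ->
  FQ_legal (k.+4.+2 :: s) = FQ_legal s.
Proof.
move=> /allP les.
have top_notin : k.+4.+2 \notin s by apply/negP => /les; lia.
rewrite /FQ_legal /= top_notin !inE subnn /=.
have -> : all (fun j => [&& k.+4.+2 - j != 1, k.+4.+2 - j != 3 & k.+4.+2 - j != 4]) s.
  by apply/allP=> j /les; lia.
congr [&& _, _, _ & _]; apply: eq_in_all => i /les le_i /=.
by rewrite (_ : i - k.+4.+2 = 0) //; lia.
Qed.

Definition sumQ (S : seq nat) : nat := sumn (map Q S).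

Lemma sumQ_rem S i : i \in S -> sumQ S = Q i + sumQ (rem i S).
Proof. by move/perm_to_rem/(perm_map Q)/perm_sumn. Qed.

Definition legal_below (j : nat) (S : seq nat) : bool :=
  FQ_legal S && all (fun i => i <= j) S.

Lemma legal_below_peel j S : legal_below j S ->
  [\/ legal_below j.-1 S,
      exists2 T, legal_below (j - 5) T & sumQ S = Q j + sumQ T |
      exists2 T, legal_below (j - 7) T & sumQ S = Q j + Q (j - 2) + sumQ T].
Proof.
case/andP=> LS /allP leS; have uS := legal_uniq LS.
have [jS | jNS] := boolP (j \in S); last first.
  apply: Or31; rewrite /legal_below LS; apply/allP=> i iS.
  have : i != j by apply: contraNneq jNS => <-.
  by have := leS i iS; lia.
have rem_jP i : i \in rem j S -> i \in S /\ (i = j - 2 \/ i <= j - 5).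
  rewrite mem_rem_uniq // => /andP[ij iS]; split=> //.
  have lt_ij : i < j by have := leS i iS; lia.
  by have := legal_gap LS iS jS lt_ij; lia.
have L_rem_j := legal_subseq (rem_subseq j S) LS.
have [j2 | j2N] := boolP (j - 2 \in rem j S); last first.
  apply: Or32; exists (rem j S); last exact: sumQ_rem.
  rewrite /legal_below L_rem_j; apply/allP=> i iR.
  have : i != j - 2 by apply: contraNneq j2N => <-.
  by have [_] := rem_jP i iR; lia.
apply: Or33; exists (rem (j - 2) (rem j S)); last first.
  by rewrite (sumQ_rem jS) (sumQ_rem j2) addnA.
rewrite /legal_below (legal_subseq (rem_subseq _ _) L_rem_j); apply/allP=> i.
rewrite mem_rem_uniq ?rem_uniq // => /andP[i_j2 /rem_jP[iS i_le]].
have [j2S _] := rem_jP _ j2.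
have lt_ij2 : i < j - 2 by lia.
by have := legal_gap LS iS j2S lt_ij2; lia.
Qed.

Lemma mem_sublists_sub s T : T \in sublists s -> {subset T <= s}.
Proof.
elim: s T => [|x s IH] T /=; first by rewrite inE => /eqP ->.
rewrite mem_cat => /orP[/mapP[t /IH sub_ts ->] | /IH sub_Ts] i.
- by rewrite !inE => /orP[-> | /sub_ts ->]; rewrite ?orbT.
- by rewrite inE => /sub_Ts ->; rewrite orbT.
Qed.

Lemma filter_sublists (p : pred nat) s : filter p s \in sublists s.
Proof.
elim: s => [|x s IH] /=; first by rewrite inE.
by rewrite mem_cat; case: (p x); rewrite ?(map_f (cons x) IH) ?IH ?orbT.
Qed.

Lemma leq_sumn_sublists (f : nat -> nat) s T :
  T \in sublists s -> sumn (map f T) <= sumn (map f s).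
Proof.
elim: s T => [|x s IH] T /=; first by rewrite inE => /eqP ->.
by rewrite mem_cat => /orP[/mapP[t /IH le_t ->] | /IH]; rewrite /=; lia.
Qed.

Definition legal_below_sums (j : nat) : seq nat :=
  [seq sumQ T | T <- sublists (iota 1 j) & FQ_legal T].

Lemma legal_below_sumsP j m :
  reflect (exists2 S, legal_below j S & sumQ S = m) (m \in legal_below_sums j).
Proof.
apply: (iffP mapP) => [[T] | [S /andP[LS /allP leS] <-]].
  rewrite mem_filter => /andP[LT /mem_sublists_sub subT] ->.
  exists T => //; rewrite /legal_below LT; apply/allP=> i /subT.
  by rewrite mem_iota; lia.
set T := [seq i <- iota 1 j | i \in S].
have pST : perm_eq S T.
  apply: uniq_perm; rewrite ?filter_uniq ?iota_uniq ?legal_uniq // => i.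
  rewrite mem_filter mem_iota; case iS: (i \in S) => //=.
  by have := leS i iS; have := legal_gt0 LS iS; lia.
exists T; last by apply/perm_sumn/perm_map.
by rewrite mem_filter -(legal_perm pST) LS filter_sublists.
Qed.

(* The inductive steps below use the recurrences from j = 7 (resp. 9, 6) on;
   smaller indices are settled by enumerating legal_below_sums. *)
Lemma sumQ_lt_Q j S : legal_below j S -> sumQ S < Q j.+3.
Proof.
elim/ltn_ind: j S => j IH S LS.
have [j_lt7 | j_ge7] := ltnP j 7.
  have /allP/(_ j) : all (fun j => all (ltn^~ (Q j.+3)) (legal_below_sums j))
                         (iota 0 7) by vm_compute.
  by rewrite mem_iota => /(_ j_lt7)/allP; apply; apply/legal_below_sumsP; exists S.
case: j IH LS j_ge7 => [|[|[|[|[|[|[|k]]]]]]] // IH LS _.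
have := legal_below_peel LS; rewrite succnK !subSS !subn0.
case=> [LS' | [T /IH ltT ->] | [T /IH ltT ->]].
- have := IH _ (ltnSn _) _ LS'; have : Q k.+4.+4.+1 < Q k.+4.+4.+2 by rewrite ltn_Q.
  lia.
- have := ltT ltac:(lia); have : Q k.+4.+3 < Q k.+4.+4.+1 by rewrite ltn_Q.
  by have := Q_rec k.+3; lia.
- have := ltT ltac:(lia).
  by have := Q_rec k.+3; have := Q_rec k.+2; have := Q_rec k.+1; lia.
Qed.

Lemma sumQ_neq_Q n S : legal_below n S -> sumQ S != Q n.+1.
Proof.
elim/ltn_ind: n S => n IH S LS.
have [n_lt9 | n_ge9] := ltnP n 9.
  have /allP/(_ n) : all (fun n => Q n.+1 \notin legal_below_sums n) (iota 0 9)
    by vm_compute.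
  rewrite mem_iota => /(_ n_lt9); apply: contra => /eqP sumS.
  by apply/legal_below_sumsP; exists S.
case: n IH LS n_ge9 => [|[|[|[|[|[|[|[|[|k]]]]]]]]] // IH LS _.
have := legal_below_peel LS; rewrite succnK !subSS !subn0.
case=> [LS' | [T /IH neqT ->] | [T _ ->]].
- have := legal_below_peel LS'; rewrite succnK !subSS !subn0.
  case=> [LS'' | [T /sumQ_lt_Q ltT ->] | [T /IH neqT ->]].
  + by have := sumQ_lt_Q LS''; lia.
  + have : Q k.+4.+2 < Q k.+4.+3 by rewrite ltn_Q.
    by have := Q_rec2 k.+4; lia.
  + have := neqT ltac:(lia).
    by have := Q_rec2 k.+4; have := Q_rec k; lia.
- have := neqT ltac:(lia).
  by have := Q_rec k.+3; lia.
- have : Q k.+4.+1 < Q k.+4.+3 by rewrite ltn_Q.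
  by have := Q_rec k.+3; lia.
Qed.

Lemma legal_below_of_lt n m : m < Q n.+1 -> exists2 S, legal_below n S & sumQ S = m.
Proof.
elim/ltn_ind: n m => n IH m lt_m.
have [n_lt6 | n_ge6] := ltnP n 6.
  have /allP/(_ n) : all (fun n => all (mem (legal_below_sums n)) (iota 0 (Q n.+1)))
                         (iota 0 6) by vm_compute.
  rewrite mem_iota => /(_ n_lt6)/allP/(_ m).
  by rewrite mem_iota => /(_ lt_m)/legal_below_sumsP.
case: n IH lt_m n_ge6 => [|[|[|[|[|[|k]]]]]] // IH lt_m _.
have [lt_m' | ge_m'] := ltnP m (Q k.+4.+2).
  have [S /andP[LS /allP leS] <-] := IH k.+4.+1 (ltnSn _) m lt_m'.
  by exists S => //; rewrite /legal_below LS; apply/allP=> i /leS; lia.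
have [T /andP[LT leT] sumT] := IH k.+1 ltac:(lia) (m - Q k.+4.+2)
  ltac:(by move: lt_m; rewrite Q_rec; lia).
exists (k.+4.+2 :: T); last by change (Q k.+4.+2 + sumQ T = m); rewrite sumT; lia.
by rewrite /legal_below legal_cons // LT /= leqnn; apply: sub_all leT => i; lia.
Qed.

Lemma decomp_with_Q n m :
  decomp_with [seq Q i | i <- iota 1 n] m = (m \in legal_below_sums n).
Proof.
rewrite /decomp_with size_map size_iota.
have nthQ T : T \in sublists (iota 1 n) ->
    [seq nth 0 [seq Q i | i <- iota 1 n] i.-1 | i <- T] = map Q T.
  move/mem_sublists_sub=> subT; apply/eq_in_map=> i /subT; rewrite mem_iota => i_n.
  by rewrite (nth_map 0) ?nth_iota ?size_iota; [congr Q | ..]; lia.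
apply/hasP/mapP=> [[T Ts /andP[LT /eqP <-]] | [T]].
  by exists T; rewrite ?mem_filter ?LT ?nthQ.
rewrite mem_filter => /andP[LT Ts] ->.
by exists T; [exact: Ts | rewrite LT nthQ ?eqxx].
Qed.

Lemma decomp_with_leq_sumn l m : decomp_with l m -> m <= sumn l.
Proof.
case/hasP=> S /(leq_sumn_sublists (fun i => nth 0 l i.-1)) le_S /andP[_ /eqP <-].
apply: leq_trans le_S _; rewrite -[1]/(1 + 0) iotaDl -map_comp.
by rewrite -[in leqRHS](mkseq_nth 0 l).
Qed.

Lemma find_iota (p : pred nat) a n k : k < n ->
  (forall i, i < k -> ~~ p (a + i)) -> p (a + k) -> find p (iota a n) = k.
Proof.
move=> lt_kn before_k pk.
have has_p : has p (iota a n) by apply/hasP; exists (a + k); rewrite // mem_iota; lia.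
have [lt_fk | lt_kf | //] := ltngtP (find p (iota a n)) k.
  have := nth_find 0 has_p; rewrite nth_iota; last exact: ltn_trans lt_kn.
  by rewrite (negbTE (before_k _ lt_fk)).
by have := before_find 0 lt_kf; rewrite nth_iota // pk.
Qed.

Lemma next_FQ_Q n : next_FQ [seq Q i | i <- iota 1 n] = Q n.+1.
Proof.
have Q_gt0 : 0 < Q n.+1 by have := leq_Q n.+1; lia.
have decompP m : decomp_with [seq Q i | i <- iota 1 n] m <->
                 exists2 S, legal_below n S & sumQ S = m.
  by rewrite decomp_with_Q; split=> /legal_below_sumsP.
rewrite /next_FQ (@find_iota _ 1 _ (Q n.+1).-1); first exact: prednK.
- rewrite ltnS; apply: decomp_with_leq_sumn; apply/decompP.
  by apply: legal_below_of_lt; lia.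
- by move=> i lt_i; rewrite negbK; apply/decompP/legal_below_of_lt; lia.
- by rewrite add1n prednK //; apply/negP=> /decompP[S /sumQ_neq_Q/eqP neqS /neqS].
Qed.

Lemma FQ_listE n : FQ_list n = [seq Q i | i <- iota 1 n].
Proof.
elim: n => // n IH; rewrite [LHS]/= IH next_FQ_Q -map_rcons.
by rewrite -cats1 -(addn1 n) iotaD add1n addn1.
Qed.

Lemma q_Q n : q n = Q n.
Proof.
by case: n => // n; rewrite /q FQ_listE (nth_map 0) ?size_iota // nth_iota.
Qed.

Lemma greedy_idx_spec m : 0 < m ->
  [/\ 0 < greedy_idx m, Q (greedy_idx m) <= m & m < Q (greedy_idx m).+1].
Proof.
move=> m_gt0.
have -> : greedy_idx m = \max_(1 <= k < m.+1 | Q k <= m) k.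
  by apply: eq_bigl => k; rewrite q_Q.
set g := \max_(1 <= k < m.+1 | Q k <= m) k.
have g_gt0 : 0 < g by apply: (leq_bigmax_seq (F := id) 1); rewrite ?mem_index_iota.
have Qg : Q g <= m.
  by apply: (big_ind (fun k => Q k <= m)) => // x y; rewrite /maxn; case: ltnP.
split=> //; rewrite ltnNge; apply/negP=> Qg1.
suff : g.+1 <= g by rewrite ltnn.
apply: (leq_bigmax_seq (F := id)) => //; rewrite mem_index_iota.
by have := leq_Q g.+1; lia.
Qed.

Lemma greedy_idx_eq n m : 0 < m -> Q n <= m < Q n.+1 -> greedy_idx m = n.
Proof.
move=> m_gt0 /andP[le_m lt_m]; have [_ le_g lt_g] := greedy_idx_spec m_gt0.
have : greedy_idx m < n.+1 by rewrite -ltn_Q; lia.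
have : n < (greedy_idx m).+1 by rewrite -ltn_Q; lia.
lia.
Qed.

Lemma greedy_aux_fuel f f' m : m <= f -> m <= f' -> greedy_aux f m = greedy_aux f' m.
Proof.
elim: f f' m => [|f IH] [|f'] [|m] //= le_f le_f'.
have [g_gt0 _ _] := greedy_idx_spec (ltn0Sn m); have := leq_Q (greedy_idx m.+1).
by rewrite q_Q => le_g; congr (_ :: _); apply: IH; lia.
Qed.

Lemma greedyE m : 0 < m -> greedy m = greedy_idx m :: greedy (m - Q (greedy_idx m)).
Proof.
case: m => // m _; rewrite /greedy -[greedy_aux _ _]/(_ :: _) q_Q.
congr (_ :: _); apply: greedy_aux_fuel => //.
by have [g_gt0 _ _] := greedy_idx_spec (ltn0Sn m); have := leq_Q (greedy_idx m.+1); lia.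
Qed.

Lemma greedy_leq r j : r < Q j.+1 -> all (fun i => i <= j) (greedy r).
Proof.
elim/ltn_ind: r => -[// | r] IH lt_r; rewrite greedyE //=.
have [g_gt0 le_g lt_g] := greedy_idx_spec (ltn0Sn r).
have lt_g_j : greedy_idx r.+1 < j.+1 by rewrite -ltn_Q; lia.
rewrite -ltnS lt_g_j.
by apply: IH; have := leq_Q (greedy_idx r.+1); lia.
Qed.

Lemma greedy_Q_add k r : r < Q k.+2 -> greedy (Q k.+4.+2 + r) = k.+4.+2 :: greedy r.
Proof.
move=> lt_r; have rec := Q_rec k; have le_Q6 := leq_Q k.+4.+2.
by rewrite greedyE ?(greedy_idx_eq (n := k.+4.+2)) ?addKn //; lia.
Qed.

Lemma greedy_small m : 0 < m <= 5 -> greedy m = [:: m].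
Proof.
move=> m_small.
have [Qm lt_m] : Q m = m /\ m < Q m.+1 by case: m m_small => [|[|[|[|[|[|]]]]]].
by rewrite greedyE ?(greedy_idx_eq (n := m)) ?Qm ?subnn ?lt_m ?leqnn //; lia.
Qed.

Lemma h_small k : 1 <= k <= 5 -> h k = k.
Proof.
have greedy_first : map greedy (iota 1 6) = [:: [:: 1]; [:: 2]; [:: 3]; [:: 4]; [:: 5]; [:: 5; 1]].
  rewrite /= [greedy 6]greedyE // (greedy_idx_eq (n := 5)) // (_ : 6 - Q 5 = 1) //.
  by rewrite !greedy_small.
case/andP=> k_gt0 k_le5; rewrite /h q_Q -(count_map greedy FQ_legal).
have -> : iota 1 (Q k.+1 - 1) = take (Q k.+1 - 1) (iota 1 6).
  by rewrite take_iota; congr iota; case: k k_gt0 k_le5 => [|[|[|[|[|[|]]]]]].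
by rewrite map_take greedy_first; case: k k_gt0 k_le5 => [|[|[|[|[|[|]]]]]].
Qed.

Lemma h_rec n : 6 <= n -> h n = h n.-1 + h (n - 5) + 1.
Proof.
case: n => [|[|[|[|[|[|k]]]]]] // _; rewrite /h !q_Q succnK !subSS subn0 Q_rec.
have le_Q2 := leq_Q k.+2; have le_Q6 := leq_Q k.+4.+2.
rewrite (_ : Q k.+4.+2 + Q k.+2 - 1 = (Q k.+4.+2 - 1) + Q k.+2); last by lia.
rewrite iotaD count_cat -addnA (_ : 1 + (Q k.+4.+2 - 1) = Q k.+4.+2 + 0); last by lia.
rewrite iotaDl count_map; congr (_ + _).
rewrite (eq_in_count (a2 := fun r => FQ_legal (greedy r))); last first.
  move=> r; rewrite mem_iota /= => lt_r.
  by rewrite greedy_Q_add ?legal_cons //; apply: greedy_leq.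
by case: (Q k.+2) le_Q2 => // x _; rewrite subn1 /= addnC.
Qed.

Theorem mainTheorem13 :
  (forall k : nat, 1 <= k <= 5 -> h k = k) /\
  (forall n : nat, 6 <= n -> h n = h n.-1 + h (n - 5) + 1).
Proof. split; [exact: h_small | exact: h_rec]. Qed.
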